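(* Let $G$ be a solvable group and let $H$ be a subgroup of $G$ with $H\le G'$ (i.e. $r_{ab}(H)=0$). If $H$ is verbally closed in $G$, then $H=1$.
   Context: $G'$ is the derived subgroup of $G$. A subgroup $H\le G$ is verbally closed in $G$ if for every group word $w(x_1,\dots,x_n)$ (without constants) and every $h\in H$, if the equation $w(x_1,\dots,x_n)=h$ has a solution in $G$, then it has a solution in $H$. *)

Set Implicit Arguments.

Record Group := {
  gcar :> Type;
  gmul : gcar -> gcar -> gcar;
  ginv : gcar -> gcar;
  gone : gcar;
  gmul_assoc : forall x y z, gmul x (gmul y z) = gmul (gmul x y) z;
  gmul_1l : forall x, gmul gone x = x;
  gmul_Vl : forall x, gmul (ginv x) x = gone
}.

Arguments gmul {g}.
Arguments ginv {g}.
Arguments gone {g}.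

Definition is_subgroup (G : Group) (H : G -> Prop) : Prop :=
  H gone /\ (forall x y, H x -> H y -> H (gmul x y)) /\ (forall x, H x -> H (ginv x)).

Definition comm (G : Group) (x y : G) : G :=
  gmul (gmul (ginv x) (ginv y)) (gmul x y).

Inductive commutator_sub (G : Group) (S : G -> Prop) : G -> Prop :=
| cs_comm : forall x y, S x -> S y -> commutator_sub G S (@comm G x y)
| cs_one : commutator_sub G S gone
| cs_mul : forall x y, commutator_sub G S x -> commutator_sub G S y ->
           commutator_sub G S (gmul x y)
| cs_inv : forall x, commutator_sub G S x -> commutator_sub G S (ginv x).

Fixpoint derived_series (G : Group) (n : nat) : G -> Prop :=
  match n with
  | O => fun _ => True
  | S m => commutator_sub G (derived_series G m)
  end.

Definition derived (G : Group) : G -> Prop := derived_series G 1.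

Definition solvable (G : Group) : Prop :=
  exists n, forall x, derived_series G n x -> x = gone.

Inductive word : Type :=
| WVar : nat -> word
| WOne : word
| WMul : word -> word -> word
| WInv : word -> word.

Fixpoint weval (G : Group) (f : nat -> G) (w : word) : G :=
  match w with
  | WVar i => f i
  | WOne => gone
  | WMul u v => gmul (weval G f u) (weval G f v)
  | WInv u => ginv (weval G f u)
  end.

Definition verbally_closed (G : Group) (H : G -> Prop) : Prop :=
  forall (w : word) (h : G), H h ->
    (exists f : nat -> G, weval G f w = h) ->
    exists f : nat -> G, (forall i, H (f i)) /\ weval G f w = h.

(* Every element of G' is the value of a word in the verbal subgroup of
   commutator words (products of commutators and their inverses).  Verbal
   closedness moves the solution of [w = h] into H, so H is contained in its
   own derived subgroup [H,H].  By induction H then lies in every term of the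
   derived series of G, and solvability forces H = 1. *)

From Stdlib Require Import Arith.

Fixpoint wmap (g : nat -> nat) (w : word) : word :=
  match w with
  | WVar i => WVar (g i)
  | WOne => WOne
  | WMul u v => WMul (wmap g u) (wmap g v)
  | WInv u => WInv (wmap g u)
  end.

Lemma weval_wmap (G : Group) (f : nat -> G) (g : nat -> nat) (w : word) :
  weval G f (wmap g w) = weval G (fun i => f (g i)) w.
Proof. induction w; simpl; congruence. Qed.

Lemma weval_ext (G : Group) (f1 f2 : nat -> G) (w : word) :
  (forall i, f1 i = f2 i) -> weval G f1 w = weval G f2 w.
Proof. intros E; induction w; simpl; congruence. Qed.

(* Two assignments merged into one, [f1] on the even variables and [f2] on the
   odd ones, so that a product of two words can be evaluated independently. *)
Definition interleave (G : Group) (f1 f2 : nat -> G) (i : nat) : G :=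
  if Nat.even i then f1 (Nat.div2 i) else f2 (Nat.div2 i).

Lemma weval_interleave_even (G : Group) (f1 f2 : nat -> G) (w : word) :
  weval G (interleave G f1 f2) (wmap (Nat.mul 2) w) = weval G f1 w.
Proof.
  rewrite weval_wmap; apply weval_ext; intro i; unfold interleave.
  now rewrite Nat.even_mul, Nat.div2_double.
Qed.

Lemma weval_interleave_odd (G : Group) (f1 f2 : nat -> G) (w : word) :
  weval G (interleave G f1 f2) (wmap (fun n => Nat.succ (2 * n)) w) = weval G f2 w.
Proof.
  rewrite weval_wmap; apply weval_ext; intro i; unfold interleave.
  now rewrite Nat.even_succ, Nat.odd_mul, Nat.div2_succ_double.
Qed.

Definition wcomm (u v : word) : word := WMul (WMul (WInv u) (WInv v)) (WMul u v).

Inductive commutator_word : word -> Prop :=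
| cw_comm : forall u v, commutator_word (wcomm u v)
| cw_one : commutator_word WOne
| cw_mul : forall u v, commutator_word u -> commutator_word v ->
           commutator_word (WMul u v)
| cw_inv : forall u, commutator_word u -> commutator_word (WInv u).

Lemma commutator_word_wmap (g : nat -> nat) (w : word) :
  commutator_word w -> commutator_word (wmap g w).
Proof. induction 1; simpl; constructor; auto. Qed.

Lemma commutator_sub_commutator_word (G : Group) (S : G -> Prop) (x : G) :
  commutator_sub G S x -> exists w f, commutator_word w /\ weval G f w = x.
Proof.
  induction 1 as [x y _ _ | | x y _ [w1 [f1 [C1 E1]]] _ [w2 [f2 [C2 E2]]]
                 | x _ [w [f [C E]]]].
  - exists (wcomm (WVar 0) (WVar 1)), (fun i => match i with 0 => x | _ => y end).
    split; [constructor | reflexivity].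
  - exists WOne, (fun _ => gone); split; [constructor | reflexivity].
  - exists (WMul (wmap (Nat.mul 2) w1) (wmap (fun n => Nat.succ (2 * n)) w2)),
      (interleave G f1 f2).
    split; [constructor; apply commutator_word_wmap; assumption |].
    simpl; now rewrite weval_interleave_even, weval_interleave_odd, E1, E2.
  - exists (WInv w), f; split; [constructor; assumption | simpl; congruence].
Qed.

Lemma subgroup_weval (G : Group) (H : G -> Prop) (f : nat -> G) (w : word) :
  is_subgroup G H -> (forall i, H (f i)) -> H (weval G f w).
Proof. intros [H1 [HM HI]] Hf; induction w; simpl; auto. Qed.

Lemma commutator_word_commutator_sub (G : Group) (H : G -> Prop) (f : nat -> G) (w : word) :
  is_subgroup G H -> (forall i, H (f i)) -> commutator_word w ->
  commutator_sub G H (weval G f w).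
Proof.
  intros SH Hf C; induction C; simpl; constructor; auto; apply subgroup_weval; auto.
Qed.

Lemma commutator_sub_mono (G : Group) (S T : G -> Prop) :
  (forall x, S x -> T x) -> forall x, commutator_sub G S x -> commutator_sub G T x.
Proof. intros ST x C; induction C; constructor; auto. Qed.

Lemma verbally_closed_sub_perfect (G : Group) (H : G -> Prop) :
  is_subgroup G H -> (forall x, H x -> derived G x) -> verbally_closed G H ->
  forall x, H x -> commutator_sub G H x.
Proof.
  intros SH HD VC x Hx.
  destruct (commutator_sub_commutator_word _ _ _ (HD x Hx)) as [w [f [C E]]].
  destruct (VC w x Hx (ex_intro _ f E)) as [f' [Hf' E']].
  rewrite <- E'; now apply commutator_word_commutator_sub.
Qed.

Lemma perfect_sub_derived_series (G : Group) (H : G -> Prop) :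
  (forall x, H x -> commutator_sub G H x) ->
  forall n x, H x -> derived_series G n x.
Proof.
  intros HH n; induction n as [| n IH]; simpl; intros x Hx; [exact I |].
  exact (commutator_sub_mono G H _ IH x (HH x Hx)).
Qed.

Theorem proposition1 (G : Group) (H : G -> Prop) :
  solvable G -> is_subgroup G H ->
  (forall x, H x -> derived G x) ->
  verbally_closed G H ->
  forall x, H x -> x = gone.
Proof.
  intros [n Hn] SH HD VC x Hx.
  apply Hn, (perfect_sub_derived_series G H); auto.
  now apply verbally_closed_sub_perfect.
Qed.
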